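(* Let $\mathbf{Y}\sim\mathcal{MMN}_p(\boldsymbol{\xi},\mathbf{\Omega},\boldsymbol{\delta};H)$. Then there exists a $p\times p$ matrix $\mathbf{A}_*$ such that $\mathbf{Z}^*=\mathbf{A}_*(\mathbf{Y}-\boldsymbol{\xi})\sim\mathcal{MMN}_p(\mathbf{0},\mathbf{I}_p,\boldsymbol{\delta}_{\mathbf{Z}^*};H)$ with $\boldsymbol{\delta}_{\mathbf{Z}^*}=(\delta_*,0,\dots,0)^\top$, where $\delta_*=(\boldsymbol{\delta}^\top\overline{\mathbf{\Omega}}^{-1}\boldsymbol{\delta})^{1/2}$; in particular at most one component of $\boldsymbol{\delta}_{\mathbf{Z}^*}$ is nonzero.
   Context: For $d\ge1$, $\boldsymbol{\xi}\in\mathbb{R}^d$, a $d\times d$ symmetric positive definite $\mathbf{\Omega}$, put $\boldsymbol{\omega}=\mathrm{diag}(\mathbf{\Omega}_{11}^{1/2},\dots,\mathbf{\Omega}_{dd}^{1/2})$ and $\overline{\mathbf{\Omega}}=\boldsymbol{\omega}^{-1}\mathbf{\Omega}\boldsymbol{\omega}^{-1}$; let $\boldsymbol{\delta}\in\mathbb{R}^d$ with $\overline{\mathbf{\Omega}}-\boldsymbol{\delta}\boldsymbol{\delta}^\top$ positive definite. For a real random variable $U$ with CDF $H$ and $\mathbf{Z}\sim\mathcal{N}_d(\mathbf{0},\overline{\mathbf{\Omega}}-\boldsymbol{\delta}\boldsymbol{\delta}^\top)$ independent of $U$, the law of $\boldsymbol{\xi}+\boldsymbol{\omega}(\boldsymbol{\delta}U+\mathbf{Z})$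 is denoted $\mathcal{MMN}_d(\boldsymbol{\xi},\mathbf{\Omega},\boldsymbol{\delta};H)$. *)

From HB Require Import structures.
From mathcomp Require Import all_boot all_order all_algebra.
From mathcomp Require Import all_classical all_reals all_analysis.
Set Implicit Arguments. Unset Strict Implicit. Unset Printing Implicit Defensive.
Import Order.TTheory GRing.Theory Num.Theory.
Local Open Scope classical_set_scope.
Local Open Scope ring_scope.

Section MMN.
Context {R : realType}.

Definition posdef n (M : 'M[R]_n) : Prop :=
  M^T = M /\ forall v : 'cV[R]_n, v != 0 -> 0 < (v^T *m M *m v) 0 0.

Definition omega_of n (Om : 'M[R]_n) : 'M[R]_n :=
  diag_mx (\row_i Num.sqrt (Om i i)).

Definition Ombar n (Om : 'M[R]_n) : 'M[R]_n :=
  invmx (omega_of Om) *m Om *m invmx (omega_of Om).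

(* Borel sigma-algebra on R^n (column vectors), generated by the coordinates. *)
Definition vmeasurable n : set (set 'cV[R]_n) :=
  <<s [set A | exists (i : 'I_n) (B : set R),
         measurable B /\ A = (fun x : 'cV[R]_n => x i 0) @^-1` B] >>.

Definition random_vector d (T : measurableType d) n (X : T -> 'cV[R]_n) : Prop :=
  forall i : 'I_n, measurable_fun setT (fun w => X w i 0).

(* Z ~ N_n(0, Sigma) (Sigma positive definite), via the standard definition:
   every nonzero linear combination t^T Z is N(0, t^T Sigma t). *)
Definition centered_gaussian d (T : measurableType d) (P : probability T R)
    n (Sigma : 'M[R]_n) (Z : T -> 'cV[R]_n) : Prop :=
  random_vector Z /\
  forall t : 'cV[R]_n, t != 0 -> forall A : set R, measurable A ->
    P ((fun w => (t^T *m Z w) 0 0) @^-1` A) =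
    normal_prob 0 (Num.sqrt ((t^T *m Sigma *m t) 0 0)) A.

Definition indep_rv_vec d (T : measurableType d) (P : probability T R)
    n (U : T -> R) (Z : T -> 'cV[R]_n) : Prop :=
  forall (A : set R) (B : set 'cV[R]_n), measurable A -> vmeasurable B ->
    P (U @^-1` A `&` Z @^-1` B) = (P (U @^-1` A) * P (Z @^-1` B))%E.

(* Y ~ MMN_n(xi, Omega, delta; H): Y is a random vector on (T,P) whose law
   equals the law of xi + omega (delta U + Z) for some U with CDF H and
   Z ~ N_n(0, Omegabar - delta delta^T) independent of U (defined on some
   probability space). *)
Definition MMN d (T : measurableType d) (P : probability T R) n
    (xi : 'cV[R]_n) (Om : 'M[R]_n) (delta : 'cV[R]_n) (H : R -> R)
    (Y : T -> 'cV[R]_n) : Prop :=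
  posdef Om /\ posdef (Ombar Om - delta *m delta^T) /\ random_vector Y /\
  exists (d' : measure_display) (T' : measurableType d') (P' : probability T' R)
         (U : T' -> R) (Z : T' -> 'cV[R]_n),
    measurable_fun setT U /\
    (forall x : R, P' [set w | U w <= x] = (H x)%:E) /\
    centered_gaussian P' (Ombar Om - delta *m delta^T) Z /\
    indep_rv_vec P' U Z /\
    forall B : set 'cV[R]_n, vmeasurable B ->
      P (Y @^-1` B) =
      P' ((fun w => xi + omega_of Om *m (U w *: delta + Z w)) @^-1` B).

Definition first_coord_vec n (x : R) : 'cV[R]_n :=
  \col_(i < n) (if val i == 0%N then x else 0).

End MMN.

From HB Require Import structures.
From mathcomp Require Import all_boot all_order all_algebra.
From mathcomp Require Import all_classical all_reals all_analysis measurable_realfun.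
From mathcomp Require Import ring.
Import Order.TTheory GRing.Theory Num.Theory.
Local Open Scope ring_scope.
Set Implicit Arguments. Unset Strict Implicit.

(* Since [Omegabar] is positive definite, reducing it by
   Schur complements gives [B] with [B Omegabar B^T = I]; composing with a
   Householder reflection puts [B delta] on the first axis, and its length is
   [(delta^T Omegabar^-1 delta)^(1/2)] because [Omegabar^-1 = B^T B].  The map
   [A = B omega^-1] sends [xi + omega (delta U + Z) - xi] to
   [(B delta) U + B Z], where [B Z] is centered Gaussian with covariance
   [I - (B delta)(B delta)^T] and is still independent of [U]. *)

Section VectorDot.
Context {R : realType}.

Definition vdot n (u v : 'cV[R]_n) : R := (u^T *m v) 0 0.

Lemma vdotE n (u v : 'cV[R]_n) : u^T *m v = (vdot u v)%:M.
Proof. exact: mx11_scalar. Qed.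

Lemma vdotC n (u v : 'cV[R]_n) : vdot u v = vdot v u.
Proof. by rewrite /vdot -[u in RHS]trmxK -trmx_mul [in RHS]mxE. Qed.

Lemma vdotBl n (u v w : 'cV[R]_n) : vdot (u - v) w = vdot u w - vdot v w.
Proof. by rewrite /vdot linearB /= mulmxBl !mxE. Qed.

Lemma vdotZl n a (u w : 'cV[R]_n) : vdot (a *: u) w = a * vdot u w.
Proof. by rewrite /vdot linearZ /= -scalemxAl mxE. Qed.

Lemma vdot_sqr n (v : 'cV[R]_n) : vdot v v = \sum_i v i 0 ^+ 2.
Proof. by rewrite /vdot mxE; apply: eq_bigr => i _; rewrite mxE expr2. Qed.

Lemma vdot_ge0 n (v : 'cV[R]_n) : 0 <= vdot v v.
Proof. by rewrite vdot_sqr; apply: sumr_ge0 => i _; exact: sqr_ge0. Qed.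

Lemma vdot_eq0 n (v : 'cV[R]_n) : (vdot v v == 0) = (v == 0).
Proof.
apply/eqP/eqP => [|->]; last by rewrite /vdot mulmx0 mxE.
rewrite vdot_sqr => /psumr_eq0P v0; apply/matrixP => i j; rewrite (ord1 j) mxE.
by apply/eqP; rewrite -sqrf_eq0 v0 // => k _; exact: sqr_ge0.
Qed.

Lemma vdot_gt0 n (v : 'cV[R]_n) : v != 0 -> 0 < vdot v v.
Proof. by rewrite lt_def vdot_eq0 => ->; exact: vdot_ge0. Qed.

End VectorDot.

Section PositiveDefinite.
Context {R : realType}.

Lemma posdef1 n : posdef (1%:M : 'M[R]_n).
Proof. by split=> [|v v0]; rewrite ?trmx1 // mulmx1; exact: vdot_gt0. Qed.

Lemma posdef_diag_gt0 n (M : 'M[R]_n) i : posdef M -> 0 < M i i.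
Proof.
case=> _ pM; have e_neq0 : (delta_mx i 0 : 'cV[R]_n) != 0.
  by apply/eqP => /matrixP/(_ i 0); rewrite !mxE !eqxx => /eqP; rewrite oner_eq0.
by move/pM: e_neq0; rewrite trmx_delta -rowE -colE !mxE.
Qed.

Lemma trmx_unit_mulmx_eq0 n (B : 'M[R]_n) (v : 'cV[R]_n) :
  B \in unitmx -> (B^T *m v == 0) = (v == 0).
Proof. by move=> Bu; rewrite -trmx_eq0 trmx_mul trmxK mulmx_free_eq0 ?row_free_unit ?trmx_eq0. Qed.

Lemma posdef_congr n (S B : 'M[R]_n) :
  posdef S -> B \in unitmx -> posdef (B *m S *m B^T).
Proof.
move=> [sS pS] Bu; split; first by rewrite !trmx_mul trmxK sS mulmxA.
move=> v v0; have -> : v^T *m (B *m S *m B^T) *m v = (B^T *m v)^T *m S *m (B^T *m v).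
  by rewrite trmx_mul trmxK !mulmxA.
by apply: pS; rewrite trmx_unit_mulmx_eq0.
Qed.

Lemma posdef_drsubmx m n (M : 'M[R]_(m + n)) : posdef M -> posdef (drsubmx M).
Proof.
move=> [sM pM]; split; first by rewrite trmx_drsub sM.
move=> v v0; have := pM (col_mx 0 v); rewrite col_mx_eq0 negb_and v0 orbT => /(_ isT).
rewrite -{1}[M]submxK tr_col_mx mul_row_block mul_row_col.
by rewrite !(trmx0, mul0mx, mulmx0, add0r, addr0).
Qed.

Lemma posdef_of_sub_outer n (S : 'M[R]_n) (u : 'cV[R]_n) :
  posdef (S - u *m u^T) -> posdef S.
Proof.
move=> [sD pD]; rewrite -(subrK (u *m u^T) S); split.
  by rewrite linearD /= sD trmx_mul trmxK.
move=> v v0; rewrite mulmxDr mulmxDl mxE.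
have -> : v^T *m (u *m u^T) *m v = (vdot v u ^+ 2)%:M.
  by rewrite mulmxA -mulmxA !vdotE -scalar_mxM (vdotC u) expr2.
by apply: lt_le_trans (pD v v0) _; rewrite [X in _ <= _ + X]mxE mulr1n lerDl sqr_ge0.
Qed.

Lemma sym_block_mxE m n (S : 'M[R]_(m + n)) : S^T = S ->
  S = block_mx (ulsubmx S) (dlsubmx S)^T (dlsubmx S) (drsubmx S).
Proof. by move=> sS; rewrite trmx_dlsub sS submxK. Qed.

Definition schur_reducer n (a : R) (c : 'cV[R]_n) : 'M[R]_(1 + n) :=
  block_mx (Num.sqrt a)^-1%:M 0 (- a^-1 *: c) 1%:M.

Lemma schur_reducer_unit n a (c : 'cV[R]_n) : 0 < a -> schur_reducer a c \in unitmx.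
Proof.
move=> a_gt0; rewrite unitmxE det_lblock det_scalar1 det1 mulr1 unitfE invr_eq0.
by rewrite gt_eqF ?sqrtr_gt0.
Qed.

Lemma schur_reducerE n a (c : 'cV[R]_n) (D : 'M[R]_n) : 0 < a ->
  schur_reducer a c *m block_mx a%:M c^T c D *m (schur_reducer a c)^T =
  block_mx 1%:M 0 0 (D - a^-1 *: (c *m c^T)).
Proof.
move=> a_gt0; have sqrt_gt0 : 0 < Num.sqrt a by rewrite sqrtr_gt0.
rewrite /schur_reducer tr_block_mx !mulmx_block.
rewrite !(mul0mx, mulmx0, add0r, addr0, trmx0, mul1mx, mulmx1, tr_scalar_mx, trmx1).
have -> : - a^-1 *: c *m a%:M + c = 0.
  by rewrite mul_mx_scalar scalerA mulrN mulfV ?gt_eqF // scaleN1r addNr.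
rewrite !mul0mx add0r -!scalar_mxM; congr block_mx.
- congr (_%:M); rewrite -[X in _ * X * _](sqr_sqrtr (ltW a_gt0)).
  by field; rewrite gt_eqF.
- rewrite mul_scalar_mx (mul_scalar_mx (Num.sqrt a)^-1) linearZ /= !scalerA.
  rewrite -scalerDl; have -> : (Num.sqrt a)^-1 * a * - a^-1 + (Num.sqrt a)^-1 = 0.
    by field; rewrite !gt_eqF.
  by rewrite scale0r.
- by rewrite -scalemxAl addrC scaleNr.
Qed.

Lemma posdef_schur_reduction n (S : 'M[R]_(1 + n)) : posdef S ->
  exists L S', [/\ L \in unitmx, posdef S' & L *m S *m L^T = block_mx 1%:M 0 0 S'].
Proof.
move=> S_pd; have [sS _] := S_pd.
set a := ulsubmx S 0 0; set c := dlsubmx S.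
have a_gt0 : 0 < a by rewrite /a !mxE; exact: posdef_diag_gt0.
have S_block : S = block_mx a%:M c^T c (drsubmx S) by rewrite -mx11_scalar -sym_block_mxE.
have L_unit := schur_reducer_unit c a_gt0.
have LSL := schur_reducerE c (drsubmx S) a_gt0; rewrite -S_block in LSL.
exists (schur_reducer a c), (drsubmx S - a^-1 *: (c *m c^T)); split => //.
by have := posdef_drsubmx (posdef_congr S_pd L_unit); rewrite LSL block_mxKdr.
Qed.

Lemma posdef_whitening n (S : 'M[R]_n) :
  posdef S -> exists B : 'M[R]_n, B *m S *m B^T = 1%:M.
Proof.
elim: n S => [|n IH] S S_pd; first by exists 1%:M; apply/matrixP => -[].
have [L [S' [_ /IH[B' B'S'B'] LSL]]] := @posdef_schur_reduction n S S_pd.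
exists (block_mx 1%:M 0 0 B' *m L).
have -> : block_mx 1%:M 0 0 B' *m L *m S *m (block_mx 1%:M 0 0 B' *m L)^T =
    block_mx 1%:M 0 0 B' *m (L *m S *m L^T) *m (block_mx 1%:M 0 0 B')^T.
  by rewrite trmx_mul !mulmxA.
rewrite LSL tr_block_mx !mulmx_block.
rewrite !(mul0mx, mulmx0, add0r, addr0, trmx0, mul1mx, mulmx1, trmx1) B'S'B'.
by rewrite -scalar_mx_block.
Qed.

Lemma whitening_unitmx n (S B : 'M[R]_n) : B *m S *m B^T = 1%:M -> B \in unitmx.
Proof.
move=> BSB; have := congr1 determinant BSB; rewrite !det_mulmx det_tr det1.
by rewrite unitmxE unitfE; apply: contra_eqN => /eqP->; rewrite !mul0r eq_sym oner_eq0.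
Qed.

Lemma whitening_invmx n (S B : 'M[R]_n) : B *m S *m B^T = 1%:M -> invmx S = B^T *m B.
Proof.
move=> BSB; have SBB : S *m (B^T *m B) = 1%:M.
  by rewrite mulmxA; apply: mulmx1C; rewrite mulmxA.
have [S_unit _] := mulmx1_unit SBB.
by rewrite -[RHS](mulKmx S_unit) SBB mulmx1.
Qed.

End PositiveDefinite.

Section Householder.
Context {R : realType}.

Definition householder n (u : 'cV[R]_n) : 'M[R]_n :=
  1%:M - (2 / vdot u u) *: (u *m u^T).

Lemma householder_tr n (u : 'cV[R]_n) : (householder u)^T = householder u.
Proof. by rewrite /householder linearB linearZ /= trmx1 trmx_mul trmxK. Qed.

Lemma householderK n (u : 'cV[R]_n) : householder u *m householder u = 1%:M.
Proof.
rewrite /householder; have [->|u_neq0] := eqVneq u 0.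
  by rewrite mul0mx scaler0 subr0 mulmx1.
set k := vdot u u; have k_neq0 : k != 0 by rewrite vdot_eq0.
have uuuu : u *m u^T *m (u *m u^T) = k *: (u *m u^T).
  by rewrite -mulmxA (mulmxA u^T) vdotE mul_scalar_mx -scalemxAr.
rewrite !(mulmxBl, mulmxBr, mul1mx, mulmx1) -!scalemxAl -!scalemxAr uuuu !scalerA.
have -> : 2 / k * (2 / k) * k = 2 / k + 2 / k by field.
by rewrite scalerDl opprB addrK subrK.
Qed.

Lemma householder_mulmx n (u v : 'cV[R]_n) :
  householder u *m v = v - (2 / vdot u u * vdot u v) *: u.
Proof.
rewrite /householder mulmxBl mul1mx -scalemxAl -mulmxA vdotE.
by rewrite mul_mx_scalar scalerA.
Qed.

Lemma first_coord_vecZ p (a : R) : first_coord_vec p a = a *: first_coord_vec p 1.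
Proof. by apply/matrixP => i j; rewrite !mxE; case: ifP; rewrite ?mulr1 ?mulr0. Qed.

Lemma vdot_first_coord_vec p : (0 < p)%N ->
  vdot (first_coord_vec p (1 : R)) (first_coord_vec p 1) = 1.
Proof.
case: p => // p _; rewrite /vdot mxE big_ord_recl !mxE /= mulr1 big1 ?addr0 //.
by move=> i _; rewrite !mxE /= mulr0.
Qed.

(* For [u = 0] the reflection is the identity ([2 / 0 = 0]), which is right
   since then [v] already lies on the first axis. *)
Lemma householder_align p (v : 'cV[R]_p) : (0 < p)%N ->
  let u := v - Num.sqrt (vdot v v) *: first_coord_vec p 1 in
  householder u *m v = first_coord_vec p (Num.sqrt (vdot v v)).
Proof.
move=> p_gt0; set r := Num.sqrt _; set e := first_coord_vec p 1 => u.
rewrite householder_mulmx [RHS]first_coord_vecZ -/e.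
have v_sqr : vdot v v = r ^+ 2 by rewrite sqr_sqrtr // vdot_ge0.
have uv : vdot u v = r ^+ 2 - r * vdot e v by rewrite vdotBl vdotZl v_sqr.
have uu : vdot u u = 2 * vdot u v.
  have eu : vdot e u = vdot e v - r.
    by rewrite vdotC vdotBl vdotZl vdotC vdot_first_coord_vec // mulr1.
  by rewrite {1}/u vdotBl vdotZl eu (vdotC v u) uv; ring.
have [/eqP|uu_neq0] := eqVneq (vdot u u) 0.
  by rewrite vdot_eq0 => /eqP u0; rewrite u0 scaler0 subr0; apply/eqP; rewrite -subr_eq0 -/u u0.
have -> : 2 / vdot u u * vdot u v = 1.
  by rewrite uu; field; move: uu_neq0; rewrite uu mulf_eq0 negb_or => /andP[].
by rewrite scale1r /u opprB addrC subrK.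
Qed.

Lemma exists_orthogonal_align p (v : 'cV[R]_p) : (0 < p)%N ->
  exists Q : 'M[R]_p,
    Q *m Q^T = 1%:M /\ Q *m v = first_coord_vec p (Num.sqrt (vdot v v)).
Proof.
move=> p_gt0; eexists; split; last exact: householder_align.
by rewrite householder_tr householderK.
Qed.

Lemma whiten_align p (S : 'M[R]_p) (d : 'cV[R]_p) : (0 < p)%N -> posdef S ->
  exists B : 'M[R]_p, B *m S *m B^T = 1%:M /\
    B *m d = first_coord_vec p (Num.sqrt ((d^T *m invmx S *m d) 0 0)).
Proof.
move=> p_gt0 /posdef_whitening[B BSB].
have [Q [QQ Qv]] := exists_orthogonal_align (B *m d) p_gt0.
exists (Q *m B); split.
  have -> : Q *m B *m S *m (Q *m B)^T = Q *m (B *m S *m B^T) *m Q^T.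
    by rewrite trmx_mul !mulmxA.
  by rewrite BSB mulmx1.
by rewrite (whitening_invmx BSB) -mulmxA Qv /vdot trmx_mul !mulmxA.
Qed.

End Householder.

(* [g_sigma_algebraType] needs a pointed carrier, which ['cV_n] is not; on
   this alias, [Borel n] below carries exactly the sigma-algebra [vmeasurable]. *)
Definition colvec (R : realType) n := 'cV[R]_n.
HB.instance Definition _ (R : realType) n := Choice.on (colvec R n).
HB.instance Definition _ (R : realType) n := isPointed.Build (colvec R n) 0.

Section RandomVectors.
Context {R : realType}.
Local Open Scope classical_set_scope.

Definition coord_preimages n : set (set (colvec R n)) :=
  [set A | exists (i : 'I_n) (B : set R),
     measurable B /\ A = (fun x : 'cV[R]_n => x i 0) @^-1` B].

Local Notation Borel n := (g_sigma_algebraType (@coord_preimages n)).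

Lemma random_vector_id n : random_vector (fun x : Borel n => x : 'cV[R]_n).
Proof. by move=> i _ B mB; rewrite setTI; apply: sub_gen_smallest; exists i, B. Qed.

Lemma random_vector_mulmx d (T : measurableType d) n (M : 'M[R]_n) (X : T -> 'cV[R]_n) :
  random_vector X -> random_vector (fun w => M *m X w).
Proof.
move=> X_rv i; rewrite (_ : (fun w => _) = (fun w => \sum_j M i j * X w j 0)).
  by apply: measurable_sum => j; apply: measurable_funM => //; exact: measurable_cst.
by apply/funext => w; rewrite mxE.
Qed.

Lemma random_vector_addr d (T : measurableType d) n (c : 'cV[R]_n) (X : T -> 'cV[R]_n) :
  random_vector X -> random_vector (fun w => X w + c).
Proof.
move=> X_rv i; rewrite (_ : (fun w => _) = (fun w => X w i 0 + c i 0)).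
  by apply: measurable_funD => //; exact: measurable_cst.
by apply/funext => w; rewrite mxE.
Qed.

Lemma vmeasurable_preimage n (f : 'cV[R]_n -> 'cV[R]_n) (X : set 'cV[R]_n) :
  random_vector (f : Borel n -> 'cV[R]_n) -> vmeasurable X -> vmeasurable (f @^-1` X).
Proof.
move=> f_rv mX; rewrite -[_ @^-1` _]setTI.
apply: (@measurability _ _ (Borel n) (Borel n) setT (f : Borel n -> Borel n)
  (@coord_preimages n) erefl) => //.
move=> _ [_ [i [B [mB ->]]] <-]; exact: f_rv.
Qed.

Lemma vmeasurable_mulmx_preimage n (M : 'M[R]_n) (X : set 'cV[R]_n) :
  vmeasurable X -> vmeasurable ((fun x => M *m x) @^-1` X).
Proof. by apply: vmeasurable_preimage; exact: random_vector_mulmx (@random_vector_id n). Qed.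

Lemma vmeasurable_addr_preimage n (c : 'cV[R]_n) (X : set 'cV[R]_n) :
  vmeasurable X -> vmeasurable ((fun x => x + c) @^-1` X).
Proof. by apply: vmeasurable_preimage; exact: random_vector_addr (@random_vector_id n). Qed.

Lemma indep_rv_vec_mulmx d (T : measurableType d) (P : probability T R) n
    (M : 'M[R]_n) (U : T -> R) (Z : T -> 'cV[R]_n) :
  indep_rv_vec P U Z -> indep_rv_vec P U (fun w => M *m Z w).
Proof.
move=> UZ A B mA mB; rewrite -[_ @^-1` B]/(Z @^-1` ((fun x => M *m x) @^-1` B)).
by apply: UZ => //; exact: vmeasurable_mulmx_preimage.
Qed.

Lemma centered_gaussian_mulmx d (T : measurableType d) (P : probability T R) n
    (S M : 'M[R]_n) (Z : T -> 'cV[R]_n) : M \in unitmx ->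
  centered_gaussian P S Z -> centered_gaussian P (M *m S *m M^T) (fun w => M *m Z w).
Proof.
move=> M_unit [Z_rv Z_gauss]; split; first exact: random_vector_mulmx.
move=> t t_neq0 A mA.
have Mt_neq0 : M^T *m t != 0 by rewrite trmx_unit_mulmx_eq0.
rewrite (_ : (fun w => _) = (fun w => ((M^T *m t)^T *m Z w) 0 0)); last first.
  by apply/funext => w; rewrite trmx_mul trmxK mulmxA.
by rewrite (Z_gauss _ Mt_neq0 A mA) trmx_mul trmxK !mulmxA.
Qed.

End RandomVectors.

Section Standardization.
Context {R : realType}.
Local Open Scope classical_set_scope.

Lemma omega_of1 n : omega_of (1%:M : 'M[R]_n) = 1%:M.
Proof. by apply/matrixP => i j; rewrite !mxE eqxx sqrtr1; case: (i == j). Qed.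

Lemma Ombar1 n : Ombar (1%:M : 'M[R]_n) = 1%:M.
Proof. by rewrite /Ombar omega_of1 invmx1 !mulmx1. Qed.

Lemma omega_of_unit n (Om : 'M[R]_n) : posdef Om -> omega_of Om \in unitmx.
Proof.
move=> Om_pd; rewrite unitmxE det_diag unitfE gt_eqF //.
by apply: prodr_gt0 => i _; rewrite mxE sqrtr_gt0 posdef_diag_gt0.
Qed.

Lemma MMN_standardize d (T : measurableType d) (P : probability T R) n
    (xi : 'cV[R]_n) (Om : 'M[R]_n) (delta : 'cV[R]_n) (H : R -> R)
    (Y : T -> 'cV[R]_n) (B : 'M[R]_n) :
  MMN P xi Om delta H Y -> B *m Ombar Om *m B^T = 1%:M ->
  MMN P 0 1%:M (B *m delta) H
    (fun w => B *m invmx (omega_of Om) *m (Y w - xi)).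
Proof.
move=> [Om_pd [cov_pd [Y_rv [d' [T' [P' [U [Z [U_mfun [U_cdf [Z_gauss [UZ law]]]]]]]]]]]] BSB.
have B_unit := whitening_unitmx BSB.
have cov : B *m (Ombar Om - delta *m delta^T) *m B^T = Ombar 1%:M - (B *m delta) *m (B *m delta)^T.
  by rewrite mulmxBr mulmxBl BSB Ombar1 trmx_mul !mulmxA.
set A := B *m invmx (omega_of Om).
split; first exact: posdef1.
split; first by rewrite -cov; exact: posdef_congr.
split; first exact: random_vector_mulmx (random_vector_addr _ Y_rv).
exists d', T', P', U, (fun w => B *m Z w).
split; first exact: U_mfun.
split; first exact: U_cdf.
split; first by rewrite -cov; exact: centered_gaussian_mulmx.
split; first exact: indep_rv_vec_mulmx.
move=> X mX; rewrite -[_ @^-1` X]/(Y @^-1` ((fun x => A *m (x - xi)) @^-1` X)).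
rewrite law; last exact: vmeasurable_addr_preimage (vmeasurable_mulmx_preimage _ mX).
rewrite -comp_preimage; congr (P' (_ @^-1` X)); apply/funext => w /=.
rewrite omega_of1 mul1mx add0r addrC addKr mulmxA /A -(mulmxA B) mulVmx ?omega_of_unit // mulmx1.
by rewrite mulmxDr -scalemxAr.
Qed.

End Standardization.

Unset Implicit Arguments.

Theorem theorem5 (R : realType) (d : measure_display) (T : measurableType d)
    (P : probability T R) (p : nat) (xi : 'cV[R]_p) (Om : 'M[R]_p)
    (delta : 'cV[R]_p) (H : R -> R) (Y : T -> 'cV[R]_p) :
  (0 < p)%N ->
  MMN P xi Om delta H Y ->
  exists Astar : 'M[R]_p,
    MMN P 0 1%:M
      (first_coord_vec p (Num.sqrt ((delta^T *m invmx (Ombar Om) *m delta) 0 0)))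
      H (fun w => Astar *m (Y w - xi)).
Proof.
move=> p_gt0 Y_MMN; have [_ [cov_pd _]] := Y_MMN.
have [B [BSB Bdelta]] := whiten_align delta p_gt0 (posdef_of_sub_outer cov_pd).
exists (B *m invmx (omega_of Om)); rewrite -Bdelta.
exact: MMN_standardize.
Qed.
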